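(* Let $N\ge 2$ and $A,B,C>0$ with $B>(N-1)C$. Let $a_N=A$, $b_N=B$, $c_N=C$ and for $2\le n\le N$ let $a_{n-1}=a_n(1+c_n/b_n)$, $b_{n-1}=b_n(1-c_n^2/b_n^2)$, $c_{n-1}=c_n(1+c_n/b_n)$. Define $$\gamma=\frac{C}{(B-(N-1)C)(B+C)},\qquad \alpha=\gamma A\Big(\frac{B}{C}+1\Big),\qquad \beta=\gamma\Big(\frac{B}{C}-(N-2)\Big).$$ Then for $1\le n\le N$, $$a_n=\frac{\alpha}{\beta+(n-1)\gamma},\qquad b_n=\frac{\beta+(n-2)\gamma}{(\beta+(n-1)\gamma)(\beta-\gamma)},\qquad c_n=\frac{\gamma}{(\beta+(n-1)\gamma)(\beta-\gamma)}.$$ *)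

From mathcomp Require Import all_boot all_order all_algebra.
Set Implicit Arguments. Unset Strict Implicit. Unset Printing Implicit Defensive.
Import Order.TTheory GRing.Theory Num.Theory.
Local Open Scope ring_scope.

Definition abc_step (R : realFieldType) (t : R * R * R) : R * R * R :=
  let '(a, b, c) := t in
  (a * (1 + c / b), b * (1 - c ^+ 2 / b ^+ 2), c * (1 + c / b)).

(* The triple (a_n, b_n, c_n), obtained from (a_N,b_N,c_N) = (A,B,C)
   by N - n backward steps (meaningful for n <= N). *)
Definition abc (R : realFieldType) (A B C : R) (N n : nat) : R * R * R :=
  iter (N - n) (@abc_step R) (A, B, C).

Definition seq_a (R : realFieldType) (A B C : R) N n : R := (abc A B C N n).1.1.
Definition seq_b (R : realFieldType) (A B C : R) N n : R := (abc A B C N n).1.2.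
Definition seq_c (R : realFieldType) (A B C : R) N n : R := (abc A B C N n).2.

From mathcomp Require Import all_boot all_order all_algebra.
From mathcomp Require Import ring lra.
Set Implicit Arguments. Unset Strict Implicit. Unset Printing Implicit Defensive.
Import Order.TTheory GRing.Theory Num.Theory.
Local Open Scope ring_scope.

(* The triples (al / y, (y - g) / (y D), g / (y D)) form a family that the
   backward step maps into itself, lowering the parameter y by g.  Hence N - n
   steps from (A, B, C) lower y by (N - n) g, and it only remains to find the
   parameters al, g, D, y representing (A, B, C): they are alpha, gamma,
   beta - gamma = 1 / (B + C) and beta + (N - 1) gamma. *)

Definition abc_closed (R : realFieldType) (al g D y : R) : R * R * R :=
  (al / y, (y - g) / (y * D), g / (y * D)).

Section ClosedForm.

Variables (R : realFieldType) (al g D : R).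
Hypothesis D_neq0 : D != 0.

Lemma abc_step_closed (y : R) : y != 0 -> y - g != 0 ->
  abc_step (abc_closed al g D y) = abc_closed al g D (y - g).
Proof.
move=> y_neq0 yg_neq0; rewrite /abc_step /abc_closed.
have -> : 1 + g / (y * D) / ((y - g) / (y * D)) = y / (y - g).
  by field; rewrite y_neq0 yg_neq0 D_neq0.
by congr (_, _, _); field; rewrite ?y_neq0 ?yg_neq0 ?D_neq0.
Qed.

Lemma iter_abc_step_closed (y : R) (k : nat) :
  (forall i, (i <= k)%N -> y - i%:R * g != 0) ->
  iter k (@abc_step R) (abc_closed al g D y) = abc_closed al g D (y - k%:R * g).
Proof.
elim: k => [|k IHk] y_neq0; first by rewrite mul0r subr0.
rewrite iterS IHk => [|i le_ik]; last by rewrite y_neq0 // ltnW.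
have -> : y - k.+1%:R * g = y - k%:R * g - g by rewrite -addn1 natrD; ring.
rewrite abc_step_closed ?y_neq0 //.
by have := y_neq0 k.+1 (leqnn _); rewrite -addn1 natrD; congr (_ != _); ring.
Qed.

End ClosedForm.

Theorem proposition2p5 (R : realFieldType) (N : nat) (A B C : R) :
  (2 <= N)%N -> 0 < A -> 0 < B -> 0 < C -> (N%:R - 1) * C < B ->
  let gamma := C / ((B - (N%:R - 1) * C) * (B + C)) in
  let alpha := gamma * A * (B / C + 1) in
  let beta := gamma * (B / C - (N%:R - 2)) in
  forall n : nat, (1 <= n <= N)%N ->
    seq_a A B C N n = alpha / (beta + (n%:R - 1) * gamma) /\
    seq_b A B C N n = (beta + (n%:R - 2) * gamma)
                        / ((beta + (n%:R - 1) * gamma) * (beta - gamma)) /\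
    seq_c A B C N n = gamma / ((beta + (n%:R - 1) * gamma) * (beta - gamma)).
Proof.
move=> _ _ B_gt0 C_gt0 CB gamma alpha beta n /andP [_ n_leN].
have E_neq0 : B - (N%:R - 1) * C != 0 by rewrite gt_eqF // subr_gt0.
have BC_gt0 : 0 < B + C by lra.
have gamma_gt0 : 0 < gamma by rewrite divr_gt0 // mulr_gt0 // subr_gt0.
have betaBgamma : beta - gamma = (B + C)^-1.
  by rewrite /beta /gamma; field; rewrite E_neq0 gt_eqF ?gt_eqF.
have init : (A, B, C) =
    abc_closed alpha gamma (beta - gamma) (beta + (N%:R - 1) * gamma).
  rewrite /abc_closed betaBgamma /alpha /beta /gamma.
  by congr (_, _, _); field; rewrite E_neq0 !gt_eqF.
have y_pos i : (i <= N - n)%N -> 0 < beta + (N%:R - 1) * gamma - i%:R * gamma.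
  move=> le_i; have -> : beta + (N%:R - 1) * gamma - i%:R * gamma =
      (beta - gamma) + (N - i)%:R * gamma.
    by rewrite natrB ?(leq_trans le_i (leq_subr _ _)) //; ring.
  rewrite betaBgamma; apply: ltr_pwDl; first by rewrite invr_gt0.
  by rewrite mulr_ge0 // ltW.
rewrite /seq_a /seq_b /seq_c /abc init iter_abc_step_closed; last first.
- by move=> i /y_pos /gt_eqF ->.
- by rewrite betaBgamma invr_eq0 gt_eqF.
have -> : beta + (N%:R - 1) * gamma - (N - n)%:R * gamma =
    beta + (n%:R - 1) * gamma by rewrite natrB //; ring.
by rewrite /abc_closed /=; split; [|split]; congr (_ / _); ring.
Qed.
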